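(* In the disclosure game described in the context, an ordered partition $(\mathcal{A},\le_P)$ of $E$ is the equilibrium partition if and only if every $A\in\mathcal{A}$ is the largest lower contour set in $E\setminus\bigcup_{A'<_P A}A'$ that minimizes $\xi$; that is, $A$ solves $$\min_L \xi(L)\quad\text{s.t. } L \text{ is a lower contour set in } E\setminus\textstyle\bigcup_{A'<_PA}A',$$ and every $L$ solving this problem satisfies $L\subset A$.
   Context: Disclosure game. A state $\omega\in\{G,B\}$ is drawn with prior probability $\pi_0\in(0,1)$ on $G$. The evidence space $E$ is a finite or countably infinite set; $F_G,F_B$ are probability distributions on $E$ such that for every $e\in E$ at least one of $F_G(e),F_B(e)$ is strictly positive. The sender privately observes evidence $e$ drawn from $F_\omega$. A disclosure rule is a preorder $\precsim$ on $E$ (reflexive and transitive) satisfying: for every sequence $e_1\succsim e_2\succsim\cdots$ in $E$ there is $N\ge1$ with $e_N\precsim e_n$ for all $n\ge N$. The sender with evidence $e$ sends a message $m\in E$ with $m\precsim e$; the receiver takes an action $a\in\mathbb{R}$; for every $\mu\in[0,1]$ the receiver's expected-payoff maximization problem $\max_a \mu u_R(a,G)+(1-\mu)u_R(a,B)$ has a unique solution $\phi(\mu)$, with $\phi$ strictly increasing; the sender's payoff is $a$. For nonempty $A\subset E$ let $\nu(A)=\frac{F_G(A)\pi_0}{F_G(A)\pi_0+F_B(A)(1-\pi_0)}$ and $\xi(A)=\phi(\nu(A))$. For nonempty $A\subset E$, a nonempty $L\subset A$ is a lower contour set in $A$ if for all $e\in L$, $e'\in A$, $e'\precsim e$ implies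 $e'\in L$. An ordered partition of $E$ is a partition $\mathcal{A}$ of $E$ into nonempty sets with a total order $\le_P$ on $\mathcal{A}$ ($<_P$ its strict part). The equilibrium partition is the (unique, when it exists) ordered partition $(\mathcal{A},\le_P)$ of $E$ such that: (1) $A_1<_PA_2$ implies $\xi(A_1)<\xi(A_2)$; (2) for $A_1,A_2\in\mathcal{A}$, $e_1\in A_1$, $e_2\in A_2$, $e_1\precsim e_2$ implies $A_1\le_P A_2$; (3) for all $A\in\mathcal{A}$ and all lower contour sets $L$ in $A$, $\xi(L)\ge\xi(A)$. (Such a partition exists iff a truth-leaning equilibrium exists, and its cells are the level sets of the sender's equilibrium value function.) *)

From HB Require Import structures.
From mathcomp Require Import all_boot all_order all_algebra.
From mathcomp Require Import all_classical all_reals.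
From mathcomp Require Import ereal esum.
Set Implicit Arguments. Unset Strict Implicit. Unset Printing Implicit Defensive.
Import Order.TTheory GRing.Theory Num.Theory.
Local Open Scope classical_set_scope.
Local Open Scope ring_scope.

Inductive state := G | B.

Section Disclosure.
Variables (R : realType) (E : countType).

Definition is_distr (F : E -> R) : Prop :=
  (forall e, 0 <= F e) /\ (\esum_(e in [set: E]) (F e)%:E = 1%E).

Definition prob (F : E -> R) (A : set E) : R := fine (\esum_(e in A) (F e)%:E).

Definition nu (pi0 : R) (FG FB : E -> R) (A : set E) : R :=
  prob FG A * pi0 / (prob FG A * pi0 + prob FB A * (1 - pi0)).

Definition xi (phi : R -> R) (pi0 : R) (FG FB : E -> R) (A : set E) : R :=
  phi (nu pi0 FG FB A).

Definition disclosure_rule (le : E -> E -> Prop) : Prop :=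
  (forall e, le e e) /\
  (forall e1 e2 e3, le e1 e2 -> le e2 e3 -> le e1 e3) /\
  (forall s : nat -> E, (forall n, le (s n.+1) (s n)) ->
     exists N, (1 <= N)%N /\ forall n, (N <= n)%N -> le (s N) (s n)).

Definition receiver_best_response (uR : R -> state -> R) (phi : R -> R) : Prop :=
  forall mu, 0 <= mu <= 1 ->
    forall a, a <> phi mu ->
      mu * uR a G + (1 - mu) * uR a B < mu * uR (phi mu) G + (1 - mu) * uR (phi mu) B.

Definition lower_contour (le : E -> E -> Prop) (A L : set E) : Prop :=
  L !=set0 /\ L `<=` A /\
  (forall e e', L e -> A e' -> le e' e -> L e').

Definition ordered_partition (P : set (set E)) (leP : set E -> set E -> Prop) : Prop :=
  (forall A, P A -> A !=set0) /\
  (forall A1 A2, P A1 -> P A2 -> A1 <> A2 -> A1 `&` A2 = set0) /\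
  (forall e, exists2 A, P A & A e) /\
  (forall A, P A -> leP A A) /\
  (forall A1 A2, P A1 -> P A2 -> leP A1 A2 -> leP A2 A1 -> A1 = A2) /\
  (forall A1 A2 A3, P A1 -> P A2 -> P A3 -> leP A1 A2 -> leP A2 A3 -> leP A1 A3) /\
  (forall A1 A2, P A1 -> P A2 -> leP A1 A2 \/ leP A2 A1).

Definition ltP (leP : set E -> set E -> Prop) (A1 A2 : set E) : Prop :=
  leP A1 A2 /\ A1 <> A2.

Definition equilibrium_partition (le : E -> E -> Prop) (xiF : set E -> R)
    (P : set (set E)) (leP : set E -> set E -> Prop) : Prop :=
  ordered_partition P leP /\
  (forall A1 A2, P A1 -> P A2 -> ltP leP A1 A2 -> xiF A1 < xiF A2) /\
  (forall A1 A2 e1 e2, P A1 -> P A2 -> A1 e1 -> A2 e2 -> le e1 e2 -> leP A1 A2) /\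
  (forall A L, P A -> lower_contour le A L -> xiF A <= xiF L).

Definition remaining (P : set (set E)) (leP : set E -> set E -> Prop) (A : set E)
  : set E :=
  [set e | ~ exists2 A', P A' /\ ltP leP A' A & A' e].

Definition minimizer (le : E -> E -> Prop) (xiF : set E -> R) (S L : set E) : Prop :=
  lower_contour le S L /\ forall L', lower_contour le S L' -> xiF L <= xiF L'.

End Disclosure.

From Pilot Require Import Defs.
From mathcomp Require Import all_boot all_order all_algebra.
From mathcomp Require Import all_classical all_reals.
From mathcomp Require Import ereal esum lra ring.
Import Order.TTheory GRing.Theory Num.Theory.
Local Open Scope classical_set_scope.
Local Open Scope ring_scope.

(* For nonempty S and T, nu T <= nu S iff FG(T) FB(S) <= FB(T) FG(S), and for
   fixed T both sides are countably additive in S.  Hence a bound on the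
   posterior that holds on every piece L `&` C of a partition of L holds for L
   (strictly if it is strict on one piece), and a lower bound passes to the
   intersection of a decreasing chain of sets.
   If the partition is an equilibrium one, a lower contour set L in the cells
   at or above A splits into pieces L `&` C, each a lower contour set in C, so
   nu L >= nu A, strictly as soon as L leaves A: A is the largest minimizer.
   Conversely, if every cell is the largest minimizer, conditions (2) and (3)
   are immediate, and the union of the cells in (Z, Y] has posterior above
   nu Z.  Passing to the limit along the cells Z in [X, Y) with nu Z >= nu X
   shows that nu cannot decrease from X to Y, and additivity makes the
   increase strict.  Since phi is strictly increasing, xi compares sets as nu
   does. *)

Section esum_extra.
Context {R : realType} {T : choiceType}.
Implicit Types (S U : set T) (a : T -> \bar R).

Lemma le_esum_subset S U a : S `<=` U ->
  (\esum_(i in S) a i <= \esum_(i in U) a i)%E.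
Proof.
move=> SU; apply: ereal_sup_le => _ [X [finX XS] <-].
by exists X => //; split=> // x /XS /SU.
Qed.

Lemma esumZl S a (r : R) : 0 <= r -> (forall i, 0 <= a i)%E ->
  (\esum_(i in S) (r%:E * a i) = r%:E * \esum_(i in S) a i)%E.
Proof.
move=> r0 a0; rewrite /esum -ereal_supZl //; last first.
  by apply/set0P; exists (\sum_(x \in set0) a x)%E, set0 => //; exact: fsets_set0.
congr ereal_sup; apply/seteqP; split => x /=.
- move=> [X [finX XS] <-]; exists (\sum_(x \in X) a x)%E; first by exists X.
  by rewrite !fsbig_finite //= ge0_sume_distrr.
- move=> [_ [X [finX XS] <-] <-]; exists X => //.
  by rewrite !fsbig_finite //= ge0_sume_distrr.
Qed.

Lemma esum_bigcup_trivIset {I : choiceType} (D : set I) (F : I -> set T) a :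
  trivIset D F -> (forall x, 0 <= a x)%E ->
  (\esum_(x in \bigcup_(i in D) F i) a x = \esum_(i in D) \esum_(x in F i) a x)%E.
Proof.
move=> tF a0; rewrite esum_esum //; apply: reindex_esum => //; split.
- by move=> [/= i x] [Di Fix]; exists i.
- move=> [/= i1 x1] [/= i2 x2]; rewrite !inE /= => -[D1 F1] [D2 F2] x12.
  by congr (_, _) => //; apply: tF => //; exists x1; split=> //; rewrite x12.
- by move=> x [i Di Fix]; exists (i, x).
Qed.

End esum_extra.

Lemma total_on_subset_finite_gap {T : eqType} (C : set (set T)) (W X : set T) :
  finite_set X -> C !=set0 -> total_on C subset -> \bigcap_(G in C) G `<=` W ->
  exists2 G, C G & X `&` G `<=` W.
Proof.
move=> /finite_seqP[s ->] [G0 CG0] chainC CW; elim: s => [|e s [G CG sGW]].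
  by exists G0 => // x [].
have [We|nWe] := pselect (W e).
  by exists G => // x [/= /predU1P[-> //|xs] Gx]; exact: sGW.
have [G' CG' nG'e] : exists2 G', C G' & ~ G' e.
  apply: contrapT => noG; apply/nWe/CW => H CH.
  by apply: contrapT => nHe; apply: noG; exists H.
have [GG'|G'G] := chainC _ _ CG CG'.
- exists G => // x [/= /predU1P[-> /GG' //|xs] Gx]; exact: sGW.
- exists G' => // x [/= /predU1P[-> //|xs] /G'G Gx]; exact: sGW.
Qed.

Section distribution.
Context {R : realType} {E : countType} {F : E -> R}.
Hypothesis hF : is_distr F.
Implicit Types (S U L W : set E).

Let F_ge0 e : (0 <= (F e)%:E)%E.
Proof. by rewrite lee_fin; case: hF. Qed.

Lemma esum_prob S : (\esum_(e in S) (F e)%:E = (prob F S)%:E)%E.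
Proof.
rewrite /prob fineK // ge0_fin_numE; last exact: esum_ge0.
apply: (@le_lt_trans _ _ 1%E); last exact: ltry.
by case: hF => _ <-; exact: le_esum_subset.
Qed.

Lemma prob_ge0 S : 0 <= prob F S.
Proof. by rewrite -lee_fin -esum_prob; exact: esum_ge0. Qed.

Lemma le_prob S U : S `<=` U -> prob F S <= prob F U.
Proof. by move=> SU; rewrite -lee_fin -!esum_prob; exact: le_esum_subset. Qed.

Lemma prob0 : prob F set0 = 0.
Proof. by rewrite /prob esum_set0. Qed.

Lemma probT : prob F setT = 1.
Proof. by apply: EFin_inj; rewrite -esum_prob; case: hF. Qed.

Lemma probU S U : S `&` U = set0 -> prob F (S `|` U) = prob F S + prob F U.
Proof.
move=> SU0; apply: EFin_inj; rewrite EFinD -!esum_prob (esumID S) //.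
have SUS : (S `|` U) `&` S = S by apply/setIidr/subsetUl.
have SUnS : (S `|` U) `&` ~` S = U.
  apply/seteqP; split=> [x [[//|//]]|x Ux]; split; [by right|move=> Sx].
  by have : (S `&` U) x by []; rewrite SU0.
by rewrite SUS SUnS.
Qed.

Lemma le_point_prob S e : S e -> F e <= prob F S.
Proof.
move=> Se; rewrite -lee_fin -esum_prob.
rewrite -(@esum_set1 R E e (fun x => (F x)%:E) (F_ge0 e)).
by apply: le_esum_subset => x ->.
Qed.

Lemma prob_partition (C : set (set E)) L :
  trivIset C id -> L `<=` \bigcup_(c in C) c ->
  ((prob F L)%:E = \esum_(c in C) (prob F (L `&` c))%:E)%E.
Proof.
move=> tC LC; have LE : L = \bigcup_(c in C) (L `&` c).
  by rewrite -setI_bigcupr; apply/esym/setIidl.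
rewrite -esum_prob {1}LE esum_bigcup_trivIset //; last exact: trivIset_setIl.
by apply: eq_esum => c _; rewrite esum_prob.
Qed.

Lemma prob_setC_lt eps : 0 < eps -> exists2 X, finite_set X & prob F (~` X) < eps.
Proof.
move=> eps0; have : ((1 - eps)%:E < \esum_(e in [set: E]) (F e)%:E)%E.
  by case: hF => _ ->; rewrite lte_fin gtrBl.
move=> /ereal_sup_gt[_ [X [finX _] <-]]; rewrite -esum_fset // esum_prob lte_fin.
exists X => //; have : prob F (X `|` ~` X) = prob F X + prob F (~` X).
  by apply: probU; rewrite setICr.
by rewrite setUCr probT; lra.
Qed.

Lemma prob_chain_gap (C : set (set E)) W eps :
  C !=set0 -> total_on C subset -> \bigcap_(G in C) G `<=` W -> 0 < eps ->
  exists2 G, C G & prob F (G `\` W) < eps.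
Proof.
move=> C0 chainC CW /prob_setC_lt[X finX Xeps].
have [G CG XGW] := total_on_subset_finite_gap _ _ _ finX C0 chainC CW.
exists G => //; apply: le_lt_trans Xeps; apply: le_prob => x [Gx nWx] Xx.
exact/nWx/XGW.
Qed.

End distribution.

Section scaled_comparison.
Context {R : realType} {E : countType}.
Context {F1 F2 : E -> R} {x y : R}.
Hypotheses (hF1 : is_distr F1) (hF2 : is_distr F2) (x0 : 0 <= x) (y0 : 0 <= y).
Implicit Types (C : set (set E)) (L W : set E).

Lemma le_scaled_prob_partition C L :
  trivIset C id -> L `<=` \bigcup_(c in C) c ->
  (forall c, C c -> y * prob F2 (L `&` c) <= x * prob F1 (L `&` c)) ->
  y * prob F2 L <= x * prob F1 L.
Proof.
move=> tC LC le_c; rewrite -lee_fin !EFinM (prob_partition hF1 _ _ tC LC).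
rewrite (prob_partition hF2 _ _ tC LC) -!esumZl // => [|c|c];
  try by rewrite lee_fin prob_ge0.
by apply: le_esum => c Cc; rewrite -!EFinM lee_fin le_c.
Qed.

Lemma lt_scaled_prob_partition C L c0 :
  trivIset C id -> L `<=` \bigcup_(c in C) c ->
  (forall c, C c -> y * prob F2 (L `&` c) <= x * prob F1 (L `&` c)) ->
  C c0 -> y * prob F2 (L `&` c0) < x * prob F1 (L `&` c0) ->
  y * prob F2 L < x * prob F1 L.
Proof.
move=> tC LC le_c Cc0 lt_c0.
have LE : L = (L `&` c0) `|` (L `\` c0) by rewrite setUIDK.
have disj : (L `&` c0) `&` (L `\` c0) = set0.
  by apply/seteqP; split=> e // [[_ ?] [_ ?]].
rewrite LE !probU // !mulrDr ltr_leD //.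
apply: (le_scaled_prob_partition _ _ tC) => [e [/LC] //|c Cc].
have [->|nc] := pselect (c = c0).
  by rewrite setDKI !prob0 // !mulr0.
suff -> : (L `\` c0) `&` c = L `&` c by exact: le_c.
apply/seteqP; split=> [e [[]] //|e [Le ce]]; split=> //; split=> // c0e.
by apply: nc; apply: tC => //; exists e.
Qed.

Lemma le_scaled_prob_chain C W :
  C !=set0 -> total_on C subset ->
  (forall G, C G -> W `<=` G) -> \bigcap_(G in C) G `<=` W ->
  (forall G, C G -> y * prob F2 G <= x * prob F1 G) ->
  y * prob F2 W <= x * prob F1 W.
Proof.
move=> C0 chainC WC CW le_C; apply/ler_addgt0Pr => eps eps0.
have x1 : 0 < x + 1 by rewrite ltr_wpDl.
have [G CG gap] := prob_chain_gap hF1 _ _ _ C0 chainC CW (divr_gt0 eps0 x1).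
have GE : G = W `|` (G `\` W) by rewrite setDUK //; exact: WC.
have le_G := le_C G CG; rewrite GE !probU ?setDIK // in le_G.
have gapx : x * prob F1 (G `\` W) <= eps.
  apply: le_trans (ler_wpM2l x0 (ltW gap)) _.
  by rewrite mulrA ler_pdivrMr //; nra.
have := mulr_ge0 y0 (prob_ge0 hF2 (G `\` W)).
by move: le_G; rewrite !mulrDr; lra.
Qed.

End scaled_comparison.

Section posterior.
Context {R : realType} {E : countType} {prior : R} {FG FB : E -> R}.
Hypotheses (prior01 : 0 < prior < 1) (hG : is_distr FG) (hB : is_distr FB)
  (supp : forall e, 0 < FG e \/ 0 < FB e).
Implicit Types (C : set (set E)) (S T U L W Z : set E).
Local Notation nu := (nu prior FG FB).

Let prior_ge0 : 0 <= prior. Proof. by case/andP: prior01 => /ltW. Qed.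
Let prior_le1 : 0 <= 1 - prior.
Proof. by rewrite subr_ge0; case/andP: prior01 => _ /ltW. Qed.

Lemma nu_ge0_le1 S : 0 <= nu S <= 1.
Proof.
rewrite /nu; set g := _ * prior; set k := _ * (1 - prior).
have g0 : 0 <= g := mulr_ge0 (prob_ge0 hG S) prior_ge0.
have k0 : 0 <= k := mulr_ge0 (prob_ge0 hB S) prior_le1.
have [->|d0] := eqVneq (g + k) 0; first by rewrite invr0 mulr0 lexx ler01.
have dk : 0 < g + k by rewrite lt_def d0 addr_ge0.
by rewrite divr_ge0 ?addr_ge0 //= ler_pdivrMr ?mul1r ?lerDl.
Qed.

Lemma nu_set0 : nu set0 = 0.
Proof. by rewrite /nu !prob0 // !mul0r. Qed.

Let den_gt0 S : S !=set0 -> 0 < prob FG S * prior + prob FB S * (1 - prior).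
Proof.
move=> [e Se]; have := le_point_prob hG _ _ Se; have := le_point_prob hB _ _ Se.
have := prob_ge0 hG S; have := prob_ge0 hB S.
by case/andP: prior01; case: (supp e); nra.
Qed.

Lemma nu_leE T S : T !=set0 -> S !=set0 ->
  (nu T <= nu S) = (prob FG T * prob FB S <= prob FB T * prob FG S).
Proof.
move=> /den_gt0 dT /den_gt0 dS; rewrite /nu ler_pdivrMr // mulrAC ler_pdivlMr //.
rewrite -subr_ge0 -[RHS]subr_ge0.
set d := (X in 0 <= X = _); set d' := (X in _ = (0 <= X)).
have -> : d = prior * (1 - prior) * d' by rewrite /d /d'; ring.
by case/andP: prior01 => p0 p1; rewrite pmulr_rge0 // mulr_gt0 // subr_gt0.
Qed.

Lemma nu_geE T S : T !=set0 -> S !=set0 ->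
  (nu S <= nu T) = (prob FB T * prob FG S <= prob FG T * prob FB S).
Proof.
by move=> T0 S0; rewrite nu_leE // [prob FG S * _]mulrC [prob FB S * _]mulrC.
Qed.

Lemma nu_ltE T S : T !=set0 -> S !=set0 ->
  (nu T < nu S) = (prob FG T * prob FB S < prob FB T * prob FG S).
Proof. by move=> T0 S0; rewrite ltNge nu_geE // -ltNge. Qed.

Lemma nu_gtE T S : T !=set0 -> S !=set0 ->
  (nu S < nu T) = (prob FB T * prob FG S < prob FG T * prob FB S).
Proof. by move=> T0 S0; rewrite ltNge nu_leE // -ltNge. Qed.

Let FG_ge0 S : 0 <= prob FG S := prob_ge0 hG S.
Let FB_ge0 S : 0 <= prob FB S := prob_ge0 hB S.

Let nu_le_scaled T S : T !=set0 -> (S !=set0 -> nu T <= nu S) ->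
  prob FG T * prob FB S <= prob FB T * prob FG S.
Proof.
move=> T0 le_TS; have [->|/set0P S0] := eqVneq S set0.
  by rewrite !prob0 // !mulr0.
by rewrite -nu_leE // le_TS.
Qed.

Let nu_ge_scaled T S : T !=set0 -> (S !=set0 -> nu S <= nu T) ->
  prob FB T * prob FG S <= prob FG T * prob FB S.
Proof.
move=> T0 le_ST; have [->|/set0P S0] := eqVneq S set0.
  by rewrite !prob0 // !mulr0.
by rewrite -nu_geE // le_ST.
Qed.

Lemma nu_le_partition C L T :
  trivIset C id -> L `<=` \bigcup_(c in C) c -> T !=set0 -> L !=set0 ->
  (forall c, C c -> L `&` c !=set0 -> nu T <= nu (L `&` c)) -> nu T <= nu L.
Proof.
move=> tC LC T0 L0 le_c; rewrite nu_leE //.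
apply: (le_scaled_prob_partition hG hB (FB_ge0 T) (FG_ge0 T) _ _ tC LC) => // c Cc.
exact/nu_le_scaled/le_c.
Qed.

Lemma nu_lt_partition C L T c0 :
  trivIset C id -> L `<=` \bigcup_(c in C) c -> T !=set0 ->
  (forall c, C c -> L `&` c !=set0 -> nu T <= nu (L `&` c)) ->
  C c0 -> L `&` c0 !=set0 -> nu T < nu (L `&` c0) -> nu T < nu L.
Proof.
move=> tC LC T0 le_c Cc0 Lc00 lt_c0.
have L0 : L !=set0 by case: Lc00 => e [Le _]; exists e.
rewrite nu_ltE //.
apply: (lt_scaled_prob_partition hG hB (FB_ge0 T) (FG_ge0 T) _ _ _ tC LC _ Cc0) => //.
- by move=> c Cc; exact/nu_le_scaled/le_c.
- by rewrite -nu_ltE.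
Qed.

Lemma nu_ge_partition C L T :
  trivIset C id -> L `<=` \bigcup_(c in C) c -> T !=set0 ->
  (forall c, C c -> L `&` c !=set0 -> nu (L `&` c) <= nu T) -> nu L <= nu T.
Proof.
move=> tC LC T0 ge_c; have [->|/set0P L0] := eqVneq L set0.
  by rewrite nu_set0; case/andP: (nu_ge0_le1 T).
rewrite nu_geE //.
apply: (le_scaled_prob_partition hB hG (FG_ge0 T) (FB_ge0 T) _ _ tC LC) => // c Cc.
exact/nu_ge_scaled/ge_c.
Qed.

Lemma nu_gt_partition C L T c0 :
  trivIset C id -> L `<=` \bigcup_(c in C) c -> T !=set0 ->
  (forall c, C c -> L `&` c !=set0 -> nu (L `&` c) <= nu T) ->
  C c0 -> L `&` c0 !=set0 -> nu (L `&` c0) < nu T -> nu L < nu T.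
Proof.
move=> tC LC T0 ge_c Cc0 Lc00 lt_c0.
have L0 : L !=set0 by case: Lc00 => e [Le _]; exists e.
rewrite nu_gtE //.
apply: (lt_scaled_prob_partition hB hG (FG_ge0 T) (FB_ge0 T) _ _ _ tC LC _ Cc0) => //.
- by move=> c Cc; exact/nu_ge_scaled/ge_c.
- by rewrite -nu_gtE.
Qed.

Lemma nu_le_chain C W T :
  C !=set0 -> total_on C subset ->
  (forall G, C G -> W `<=` G) -> \bigcap_(G in C) G `<=` W ->
  T !=set0 -> W !=set0 -> (forall G, C G -> nu T <= nu G) -> nu T <= nu W.
Proof.
move=> C0 chainC WC CW T0 W0 le_C; rewrite nu_leE //.
apply: (le_scaled_prob_chain hG hB (FB_ge0 T) (FG_ge0 T) _ _ C0 chainC WC CW).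
move=> G CG.
by rewrite -nu_leE //; [exact: le_C | case: W0 => e /(WC _ CG) Ge; exists e].
Qed.

Lemma nu_lt_setUl S U Z : S `&` U = set0 -> U !=set0 -> Z !=set0 ->
  nu U <= nu Z -> nu Z < nu (S `|` U) -> nu Z < nu S.
Proof.
move=> SU0 U0 Z0 le_UZ; have [->|/set0P S0] := eqVneq S set0.
  by rewrite set0U => /(le_lt_trans le_UZ); rewrite ltxx.
have SU : (S `|` U) !=set0 by case: S0 => e Se; exists e; left.
rewrite nu_geE // !nu_ltE // !probU // in le_UZ *; lra.
Qed.

End posterior.

Lemma xi_leE {R : realType} {E : countType} {phi : R -> R} {prior : R}
    {FG FB : E -> R} :
  0 < prior < 1 -> is_distr FG -> is_distr FB ->
  (forall mu1 mu2, 0 <= mu1 <= 1 -> 0 <= mu2 <= 1 -> mu1 < mu2 -> phi mu1 < phi mu2) ->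
  forall S T, (xi phi prior FG FB S <= xi phi prior FG FB T) =
              (nu prior FG FB S <= nu prior FG FB T).
Proof.
move=> prior01 hG hB phi_incr S T.
have /le_mono_in mono : {in [pred mu | 0 <= mu <= 1] &, {homo phi : x y / x < y}}.
  by move=> x y; rewrite !inE; exact: phi_incr.
by apply: mono; rewrite inE; exact: nu_ge0_le1.
Qed.

Section lower_contour.
Context {E : countType} {le : E -> E -> Prop}.
Implicit Types (S A L U : set E).

Lemma lower_contour_trans {S A L} :
  lower_contour le S A -> lower_contour le A L -> lower_contour le S L.
Proof.
move=> [_ [AS lowA]] [L0 [LA lowL]]; split=> //; split=> [e /LA /AS //|].
move=> e e' Le Se' le_e'e.
exact: (lowL e e' Le (lowA e e' (LA _ Le) Se' le_e'e) le_e'e).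
Qed.

Lemma lower_contour_setI {S L U} : lower_contour le S L -> U `<=` S ->
  L `&` U !=set0 -> lower_contour le U (L `&` U).
Proof.
move=> [_ [_ lowL]] US LU0; split=> //; split=> [e [] //|].
by move=> e e' [Le _] Ue' le_e'e; split=> //; exact: (lowL e e' Le (US _ Ue') le_e'e).
Qed.

End lower_contour.

Definition cells_union {E : countType} (P : set (set E)) (p : set E -> Prop) :=
  \bigcup_(C in [set C | P C /\ p C]) C.

Definition cells_monotone {E : countType} (le : E -> E -> Prop) (P : set (set E))
    (leP : set E -> set E -> Prop) :=
  forall A1 A2 e1 e2, P A1 -> P A2 -> A1 e1 -> A2 e2 -> le e1 e2 -> leP A1 A2.

Section ordered_partition.
Context {E : countType} {le : E -> E -> Prop} {P : set (set E)}
  {leP : set E -> set E -> Prop}.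
Hypothesis hop : ordered_partition P leP.
Implicit Types (A C X Y Z : set E) (p : set E -> Prop).
Local Notation ltP := (Defs.ltP leP).
Local Notation remaining := (remaining P leP).
Local Notation cells_union := (cells_union P).
Local Notation cells_monotone := (cells_monotone le P leP).

Lemma cell_neq0 {A} : P A -> A !=set0.
Proof. by case: hop => + _; apply. Qed.

Lemma cell_cover e : exists2 C, P C & C e.
Proof. by case: hop => _ [_ [+ _]]; apply. Qed.

Lemma cell_uniq {C1 C2 e} : P C1 -> P C2 -> C1 e -> C2 e -> C1 = C2.
Proof.
case: hop => _ [disj _] PC1 PC2 C1e C2e; apply: contrapT => C12.
by have : (C1 `&` C2) e by []; rewrite disj.
Qed.

Lemma leP_refl {A} : P A -> leP A A.
Proof. by case: hop => _ [_ [_ [+ _]]]; apply. Qed.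

Lemma leP_anti {A1 A2} : P A1 -> P A2 -> leP A1 A2 -> leP A2 A1 -> A1 = A2.
Proof. by case: hop => _ [_ [_ [_ [+ _]]]]; apply. Qed.

Lemma leP_trans {A1 A2 A3} :
  P A1 -> P A2 -> P A3 -> leP A1 A2 -> leP A2 A3 -> leP A1 A3.
Proof. by case: hop => _ [_ [_ [_ [_ [+ _]]]]]; apply. Qed.

Lemma leP_total {A1 A2} : P A1 -> P A2 -> leP A1 A2 \/ leP A2 A1.
Proof. by case: hop => _ [_ [_ [_ [_ [_ +]]]]]; apply. Qed.

Lemma leP_ltP_trans {A1 A2 A3} :
  P A1 -> P A2 -> P A3 -> leP A1 A2 -> ltP A2 A3 -> ltP A1 A3.
Proof.
move=> P1 P2 P3 le12 [le23 ne23]; split; first exact: leP_trans le12 le23.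
by move=> e13; subst A3; apply/ne23/leP_anti.
Qed.

Lemma remaining_cell {A C e} : P A -> P C -> C e -> remaining A e <-> leP A C.
Proof.
move=> PA PC Ce; split=> [remAe|leAC [C' [PC' [leC'A neC'A]]] C'e].
  have [//|leCA] := leP_total PA PC.
  have [->|neCA] := pselect (C = A); first exact: leP_refl.
  by exfalso; apply: remAe; exists C.
have eC' := cell_uniq PC' PC C'e Ce; subst C'.
exact/neC'A/leP_anti.
Qed.

Lemma trivIset_cells p : trivIset [set C | P C /\ p C] id.
Proof. by move=> C1 C2 [PC1 _] [PC2 _] [e [C1e C2e]]; exact: cell_uniq C1e C2e. Qed.

Lemma cells_unionP p {C e} : P C -> C e -> cells_union p e <-> p C.
Proof.
move=> PC Ce; split=> [[C' [PC' pC'] C'e]|pC]; last by exists C.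
by rewrite -(cell_uniq PC' PC C'e Ce).
Qed.

Lemma sub_cells_union {p C} : P C -> p C -> C `<=` cells_union p.
Proof. by move=> PC pC e Ce; exists C. Qed.

Lemma cells_union_setI {p C} : P C -> p C -> cells_union p `&` C = C.
Proof. by move=> PC pC; apply/setIidr/sub_cells_union. Qed.

Lemma cells_union_neq0 {p C} : P C -> p C -> cells_union p !=set0.
Proof. by move=> PC pC; have [e Ce] := cell_neq0 PC; exists e, C. Qed.

Lemma cells_unionU1 p q C0 : P C0 -> (forall C, P C -> p C <-> q C \/ C = C0) ->
  cells_union p = cells_union q `|` C0.
Proof.
move=> PC0 pq; apply/seteqP; split=> e.
  move=> [C [PC /(pq _ PC) [qC|->]] Ce]; [by left; exists C | by right].
move=> [[C [PC qC] Ce]|C0e].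
  have pC : p C by apply/(pq _ PC); left.
  exact: sub_cells_union PC pC _ Ce.
have pC0 : p C0 by apply/(pq _ PC0); right.
exact: sub_cells_union PC0 pC0 _ C0e.
Qed.

Lemma cells_union_setI0 p C0 : P C0 -> ~ p C0 -> cells_union p `&` C0 = set0.
Proof.
move=> PC0 npC0; apply/seteqP; split=> e // [[C [PC pC] Ce] C0e].
by apply: npC0; rewrite -(cell_uniq PC PC0 Ce C0e).
Qed.

Lemma remaining_sub_cells {A} : P A -> remaining A `<=` cells_union (leP A).
Proof.
move=> PA e remAe; have [C PC Ce] := cell_cover e.
by apply/(cells_unionP _ PC Ce)/(remaining_cell PA PC Ce).
Qed.

Lemma cells_union_lower_contour p X : cells_monotone -> P X -> p X ->
  (forall C, P C -> p C -> leP X C) ->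
  (forall C C', P C -> P C' -> p C -> leP X C' -> leP C' C -> p C') ->
  lower_contour le (remaining X) (cells_union p).
Proof.
move=> mono PX pX geX down; split; first exact: cells_union_neq0 pX.
split=> [e [C [PC pC] Ce]|e e' [C [PC pC] Ce] remXe' le_e'e].
  exact/(remaining_cell PX PC Ce)/geX.
have [C' PC' C'e'] := cell_cover e'; apply/(cells_unionP _ PC' C'e').
apply: down pC _ (mono _ _ _ _ PC' PC C'e' Ce le_e'e) => //.
exact/(remaining_cell PX PC' C'e').
Qed.

Lemma cell_lower_contour {A} :
  cells_monotone -> P A -> lower_contour le (remaining A) A.
Proof.
move=> mono PA; split; first exact: cell_neq0.
split=> [e Ae|e e' Ae remAe' le_e'e].
  exact/(remaining_cell PA PA Ae)/leP_refl.
have [C PC Ce'] := cell_cover e'.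
have leCA := mono _ _ _ _ PC PA Ce' Ae le_e'e.
by rewrite (leP_anti PA PC ((remaining_cell PA PC Ce').1 remAe') leCA).
Qed.

End ordered_partition.

Definition largest_minimizer {R : realType} {E : countType} (le : E -> E -> Prop)
    (f : set E -> R) (S A : set E) :=
  minimizer le f S A /\ forall L, minimizer le f S L -> L `<=` A.


Section order_equivalent_objectives.
Context {R : realType} {E : countType} {le : E -> E -> Prop} {f g : set E -> R}.
Hypothesis fg : forall S T, (f S <= f T) = (g S <= g T).

Let fg_lt S T : (f S < f T) = (g S < g T).
Proof. by rewrite !ltNge fg. Qed.

Lemma minimizer_equiv S L : minimizer le f S L <-> minimizer le g S L.
Proof.
by split=> -[lowL minL]; split=> // L' /minL; rewrite fg.
Qed.

Lemma equilibrium_partition_equiv P leP :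
  equilibrium_partition le f P leP <-> equilibrium_partition le g P leP.
Proof.
split=> -[op [incr [mono low]]]; split=> //.
all: split=> [A1 A2 P1 P2 /(incr _ _ P1 P2)|]; rewrite ?fg_lt //.
all: by split=> // A L PA /(low _ _ PA); rewrite fg.
Qed.

Lemma largest_minimizer_equiv S A :
  largest_minimizer le f S A <-> largest_minimizer le g S A.
Proof.
split=> -[/minimizer_equiv minA maxA]; split=> // L /minimizer_equiv; exact: maxA.
Qed.

End order_equivalent_objectives.

Section equilibrium.
Context {R : realType} {E : countType} {prior : R} {FG FB : E -> R}.
Hypotheses (prior01 : 0 < prior < 1) (hG : is_distr FG) (hB : is_distr FB)
  (supp : forall e, 0 < FG e \/ 0 < FB e).
Context {le : E -> E -> Prop} {P : set (set E)} {leP : set E -> set E -> Prop}.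
Hypothesis hop : ordered_partition P leP.
Local Notation nu := (nu prior FG FB).
Local Notation ltP := (Defs.ltP leP).
Local Notation remaining := (remaining P leP).
Local Notation cells_union := (cells_union P).
Local Notation cells_monotone := (cells_monotone le P leP).
Implicit Types (A C L X Y Z : set E).

Lemma equilibrium_largest_minimizer A :
  equilibrium_partition le nu P leP -> P A -> largest_minimizer le nu (remaining A) A.
Proof.
move=> [_ [incr [mono low]]] PA.
have tC := trivIset_cells hop (leP A).
have remA := remaining_sub_cells hop PA.
have A0 := cell_neq0 hop PA.
have nu_piece L C : lower_contour le (remaining A) L -> P C -> leP A C ->
    L `&` C !=set0 -> nu A <= nu (L `&` C) /\ (C <> A -> nu A < nu (L `&` C)).
  move=> lowL PC leAC LC0.
  have le_C : nu C <= nu (L `&` C).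
    apply: (low _ _ PC (lower_contour_setI lowL _ LC0)) => e Ce.
    exact/(remaining_cell hop PA PC Ce).
  have [eCA|neCA] := pselect (C = A); first by subst C; split=> // /(_ erefl).
  have ltAC : nu A < nu C by apply: incr => //; split=> // eAC; apply/neCA/esym.
  by split=> [|_]; [exact/ltW/(lt_le_trans ltAC) | exact: lt_le_trans ltAC _].
have lowA := cell_lower_contour hop mono PA.
have le_nuA L : lower_contour le (remaining A) L -> nu A <= nu L.
  move=> lowL; apply: (nu_le_partition prior01 hG hB supp _ _ _ tC) => //.
  - exact: subset_trans lowL.2.1 remA.
  - exact: lowL.1.
  - by move=> C [PC leAC] /(nu_piece L C lowL PC leAC) [].
split; first by split=> // L /le_nuA.
move=> L [lowL minL] e Le; apply: contrapT => nAe.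
have [C PC Ce] := cell_cover hop e.
have leAC : leP A C by apply/(remaining_cell hop PA PC Ce)/lowL.2.1.
have LC0 : L `&` C !=set0 by exists e.
have : nu A < nu L.
  apply: (nu_lt_partition prior01 hG hB supp _ _ _ _ tC _ A0 _ (conj PC leAC) LC0).
  - exact: subset_trans lowL.2.1 remA.
  - by move=> C' [PC' leAC'] /(nu_piece L C' lowL PC' leAC') [].
  - by apply: (nu_piece L C lowL PC leAC LC0).2 => eCA; apply: nAe; rewrite -eCA.
by rewrite ltNge minL.
Qed.

Section backward.
Hypothesis largest : forall A, P A -> largest_minimizer le nu (remaining A) A.

Let lowA {A} : P A -> lower_contour le (remaining A) A.
Proof. by move=> /largest [[]]. Qed.

Lemma largest_cells_monotone : cells_monotone.
Proof.
move=> A1 A2 e1 e2 P1 P2 A1e1 A2e2 le12.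
have [//|le21] := leP_total hop P1 P2.
have [->|ne12] := pselect (A1 = A2); first exact: (leP_refl hop P2).
have remA2e1 : remaining A2 e1 by apply/(remaining_cell hop P2 P1 A1e1).
have A2e1 : A2 e1 := (lowA P2).2.2 _ _ A2e2 remA2e1 le12.
by exfalso; apply: ne12; exact: (cell_uniq hop P1 P2 A1e1 A2e1).
Qed.

Lemma largest_nu_le_lower_contour A L :
  P A -> lower_contour le A L -> nu A <= nu L.
Proof.
move=> PA lowL; apply: (largest _ PA).1.2.
exact: (lower_contour_trans (lowA PA) lowL).
Qed.

Lemma largest_nu_lt X L : P X -> lower_contour le (remaining X) L -> ~ L `<=` X ->
  nu X < nu L.
Proof.
move=> PX lowL nLX; have [[_ minX] maxX] := largest _ PX.
rewrite lt_neqAle minX // andbT; apply/eqP => eXL; apply/nLX/maxX.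
by split=> // L' /minX; rewrite eXL.
Qed.

Let Ioc Z Y := cells_union (fun C => ltP Z C /\ leP C Y).

Lemma largest_nu_lt_Ioc Z Y : P Z -> P Y -> ltP Z Y -> nu Z < nu (Ioc Z Y).
Proof.
move=> PZ PY ltZY; pose Icc := cells_union (fun C => leP Z C /\ leP C Y).
have lowIcc : lower_contour le (remaining Z) Icc.
  apply: (cells_union_lower_contour hop _ _ largest_cells_monotone PZ).
  - by split; [exact: (leP_refl hop PZ) | case: ltZY].
  - by move=> C _ [].
  - move=> C C' PC PC' [_ leCY] leZC' leC'C; split=> //.
    exact: (leP_trans hop PC' PC PY leC'C leCY).
have IccE : Icc = Ioc Z Y `|` Z.
  apply: (cells_unionU1 _ _ _ PZ) => C PC.
  split=> [[leZC leCY]|[[[leZC _] leCY]|->]].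
  - have [->|neCZ] := pselect (C = Z); [by right | left].
    by split=> //; split=> // eZC; apply/neCZ/esym.
  - by [].
  - by split; [exact: (leP_refl hop PZ) | case: ltZY].
have ZIcc : ~ Icc `<=` Z.
  move=> IccZ; have [e Ye] := cell_neq0 hop PY; case: ltZY => leZY; apply.
  have Icce : Icc e := sub_cells_union PY (conj leZY (leP_refl hop PY)) _ Ye.
  exact: (cell_uniq hop PZ PY (IccZ _ Icce) Ye).
have Z0 := cell_neq0 hop PZ.
apply: (nu_lt_setUl prior01 hG hB supp _ _ _ _ Z0 Z0 (lexx _)).
  by apply: (cells_union_setI0 hop _ _ PZ) => -[[]].
by rewrite -IccE; exact: (largest_nu_lt _ _ PZ lowIcc ZIcc).
Qed.

(* The sets Ioc Z Y, Z in Gs, form a chain whose intersection is the union of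
   the cells above all of Gs and below Y. *)
Lemma largest_nu_le_cells_above X Y (Gs : set (set E)) :
  P X -> P Y -> Gs X -> (forall Z, Gs Z -> P Z /\ ltP Z Y /\ nu X <= nu Z) ->
  nu X <= nu (cells_union (fun C => leP C Y /\ forall Z, Gs Z -> ltP Z C)).
Proof.
move=> PX PY GsX hGs.
apply: (nu_le_chain prior01 hG hB supp [set Ioc Z Y | Z in Gs]).
- by exists (Ioc X Y), X.
- move=> _ _ [Z1 /hGs[PZ1 _] <-] [Z2 /hGs[PZ2 _] <-].
  have [le12|le21] := leP_total hop PZ1 PZ2; [right|left].
  + move=> e [C [PC [ltZC leCY]] Ce]; exists C => //; split=> //; split=> //.
    exact: (leP_ltP_trans hop PZ1 PZ2 PC le12 ltZC).
  + move=> e [C [PC [ltZC leCY]] Ce]; exists C => //; split=> //; split=> //.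
    exact: (leP_ltP_trans hop PZ2 PZ1 PC le21 ltZC).
- move=> _ [Z GsZ <-] e [C [PC [leCY gtC]] Ce].
  by exists C => //; split=> //; split=> //; exact: gtC.
- move=> e inI; have [C PC Ce] := cell_cover hop e; exists C => //; split=> //.
  have inIoc Z : Gs Z -> ltP Z C /\ leP C Y.
    move=> GsZ; have := inI _ (imageP (fun Z => Ioc Z Y) GsZ).
    by move/(cells_unionP hop _ PC Ce).
  by split=> [|Z /inIoc []]; [case: (inIoc X GsX)|].
- exact: (cell_neq0 hop PX).
- apply: (cells_union_neq0 hop PY); split=> [|Z /hGs[_ []] //].
  exact: (leP_refl hop PY).
- move=> _ [Z /hGs[PZ [ltZY le_XZ]] <-].
  exact/(le_trans le_XZ)/ltW/largest_nu_lt_Ioc.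
Qed.

Lemma largest_nu_le_cells X Y : P X -> P Y -> ltP X Y -> nu X <= nu Y.
Proof.
move=> PX PY ltXY; rewrite leNgt; apply/negP => ltYX.
pose Gs := [set Z | P Z /\ leP X Z /\ ltP Z Y /\ nu X <= nu Z].
pose p C := leP C Y /\ forall Z, Gs Z -> ltP Z C.
have GsX : Gs X by split=> //; split; [exact: (leP_refl hop PX) | split].
have le_XW : nu X <= nu (cells_union p).
  by apply: (largest_nu_le_cells_above _ _ _ PX PY GsX) => Z [PZ [_ []]].
(* A cell of cells_union p with posterior at least nu X would belong to Gs,
   hence lie strictly above itself. *)
have lt_C C : P C -> p C -> nu C < nu X.
  move=> PC [leCY gtC]; rewrite ltNge; apply/negP => le_XC.
  have neCY : C <> Y by move=> eCY; move: ltYX; rewrite -eCY ltNge le_XC.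
  have GsC : Gs C by split=> //; split; [exact: (gtC X GsX).1 | split].
  by case: (gtC C GsC) => _; apply.
have pY : p Y by split=> [|Z [_ [_ []]]]; first exact: (leP_refl hop PY).
suff : nu (cells_union p) < nu X by rewrite ltNge le_XW.
apply: (nu_gt_partition prior01 hG hB supp _ _ _ _ (trivIset_cells hop p) _
  (cell_neq0 hop PX) _ (conj PY pY)) => //.
- by move=> C [PC pC] _; rewrite (cells_union_setI PC pC); exact/ltW/lt_C.
- by rewrite (cells_union_setI PY pY); exact: (cell_neq0 hop PY).
- by rewrite (cells_union_setI PY pY); exact: lt_C.
Qed.

Lemma largest_nu_lt_cells X Y : P X -> P Y -> ltP X Y -> nu X < nu Y.
Proof.
move=> PX PY ltXY; rewrite lt_neqAle largest_nu_le_cells // andbT.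
apply/eqP => eXY; pose q C := ltP X C /\ ltP C Y; pose Ioo := cells_union q.
have IocE : Ioc X Y = Ioo `|` Y.
  apply: (cells_unionU1 _ _ _ PY) => C PC.
  split=> [[ltXC leCY]|[[ltXC [leCY _]]|->]] //.
    have [->|neCY] := pselect (C = Y); [by right | by left].
  by split=> //; exact: (leP_refl hop PY).
have disj : Ioo `&` Y = set0.
  by apply: (cells_union_setI0 hop _ _ PY) => -[_ []].
have X0 := cell_neq0 hop PX.
have lt_XIoo : nu X < nu Ioo.
  apply: (nu_lt_setUl prior01 hG hB supp _ _ _ disj (cell_neq0 hop PY) X0).
    by rewrite eXY.
  by rewrite -IocE; exact: largest_nu_lt_Ioc.
suff : nu Ioo <= nu X by rewrite leNgt lt_XIoo.
apply: (nu_ge_partition prior01 hG hB supp _ _ _ (trivIset_cells hop q) _ X0) => //.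
move=> C [PC [ltXC ltCY]] _; rewrite (cells_union_setI PC (conj ltXC ltCY)) eXY.
exact: largest_nu_le_cells.
Qed.

Lemma largest_equilibrium_partition : equilibrium_partition le nu P leP.
Proof.
split=> //; split; first exact: largest_nu_lt_cells.
by split; [exact: largest_cells_monotone | exact: largest_nu_le_lower_contour].
Qed.

End backward.

End equilibrium.

Theorem theorem3 (R : realType) (E : countType)
  (pi0 : R) (FG FB : E -> R) (le : E -> E -> Prop)
  (uR : R -> state -> R) (phi : R -> R)
  (P : set (set E)) (leP : set E -> set E -> Prop) :
  0 < pi0 < 1 ->
  is_distr FG -> is_distr FB ->
  (forall e, 0 < FG e \/ 0 < FB e) ->
  disclosure_rule le ->
  receiver_best_response uR phi ->
  (forall mu1 mu2, 0 <= mu1 <= 1 -> 0 <= mu2 <= 1 -> mu1 < mu2 -> phi mu1 < phi mu2) ->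
  ordered_partition P leP ->
  (equilibrium_partition le (xi phi pi0 FG FB) P leP <->
   forall A, P A ->
     minimizer le (xi phi pi0 FG FB) (remaining P leP A) A /\
     forall L, minimizer le (xi phi pi0 FG FB) (remaining P leP A) L -> L `<=` A).
Proof.
(* Neither the well-foundedness of the disclosure rule nor the receiver's
   payoffs matter here, only the monotonicity of phi. *)
move=> pi01 hG hB supp _ _ phi_incr hop.
have xi_nu := xi_leE pi01 hG hB phi_incr.
rewrite (equilibrium_partition_equiv xi_nu).
split=> [eq A PA | largest].
  apply/(largest_minimizer_equiv xi_nu).
  exact: (equilibrium_largest_minimizer pi01 hG hB supp hop).
apply: (largest_equilibrium_partition pi01 hG hB supp hop) => A PA.
exact/(largest_minimizer_equiv xi_nu)/largest.
Qed.
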